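(* Let $T$ be a c.n.u. contraction on $H$ and let $(H_+,H_-,\Gamma_+,\Gamma_-)$ be a boundary quadruple for $A_T^{\perp_s}$ with contractive Weyl function $B$. Let $a=(x,y)\in A_T^{\perp_s}\subseteq\mathbb{H}$. Then for $\lambda\in\mathbb{D}_+$, $$\lambda f_{\hat x}(\lambda)-f_{\hat y}(\lambda)=B(\lambda)\Gamma_+a-\Gamma_-a,$$ and for $\lambda\in\mathbb{D}_-$, $$f_{\hat x}(\lambda)-\lambda f_{\hat y}(\lambda)=\Gamma_+a-B(\bar\lambda)^*\Gamma_-a.$$
   Context: $H$ is an infinite-dimensional separable complex Hilbert space with inner product $(\cdot,\cdot)_H$; $T\in\mathbb{B}(H)$, $\|T\|\le1$, is completely non-unitary. $\mathbb{K}=\ker(I-T^*T)$. $\mathbb{H}=H\oplus_\perp H$ with $[(x_1,x_2),(y_1,y_2)]=i(x_1,y_1)_H-i(x_2,y_2)_H$; $S^{\perp_s}=\{a:[a,b]=0\ \forall b\in S\}$; $A_T=\{(x,Tx):x\in\mathbb{K}\}$. $\mathbb{D}_\pm$ are two copies of the open unit disc; for $\lambda\in\mathbb{D}_\pm$, $\bar\lambda$ is regarded as a point of $\mathbb{D}_\mp$. $N_\lambda=\{(x,\lambda x)\}\cap A_T^{\perp_s}$ ($\lambda\in\mathbb{D}_+$), $N_\lambda=\{(\lambda x,x)\}\cap A_T^{\perp_s}$ ($\lambda\in\mathbb{D}_-$). A boundary quadruple: Hilbert spaces $H_\pm$, linear $\Gamma_\pm:A_T^{\perp_s}\to H_\pm$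 with $(\Gamma_+,\Gamma_-)$ bounded, onto $H_+\oplus_\perp H_-$, kernel $A_T$, and $[a,b]=i(\Gamma_+a,\Gamma_+b)-i(\Gamma_-a,\Gamma_-b)$. Contractive Weyl function: for $\lambda\in\mathbb{D}_+$, $\Gamma_+|_{N_\lambda}$ is bijective onto $H_+$ and $\Gamma_-a=B(\lambda)\Gamma_+a$ on $N_\lambda$ with $B(\lambda)\in\mathbb{B}(H_+,H_-)$, $\|B(\lambda)\|<1$; for $\lambda\in\mathbb{D}_-$, $\Gamma_-|_{N_\lambda}$ is bijective onto $H_-$ and $\Gamma_+a=B(\bar\lambda)^*\Gamma_-a$ on $N_\lambda$. $\gamma_+(\lambda)x\in N_\lambda$ with $\Gamma_+\gamma_+(\lambda)x=x$ ($\lambda\in\mathbb{D}_+$), $\gamma_-(\lambda)x\in N_\lambda$ with $\Gamma_-\gamma_-(\lambda)x=x$ ($\lambda\in\mathbb{D}_-$); $\varphi_+=pr_1\circ\gamma_+$, $\varphi_-=pr_2\circ\gamma_-$. $E_\lambda=pr_1(N_\lambda)$ ($\lambda\in\mathbb{D}_+$), $E_\lambda=pr_2(N_\lambda)$ ($\lambda\in\mathbb{D}_-$), $F^\dagger_\lambda=E_{\bar\lambda}$, $F_\lambda$ its conjugate-linear dual with pairing $((\cdot,\cdot))$. For $x\in H$, $\hat x(\lambda)\in F_\lambda$ is $\omega\mapsto(x,\omega)_H$. For $\lambda\in\mathbb{D}_+$, $\varphi_-^\dagger(\lambda):F_\lambda\to H_-$ is defined by $(\varphi_-^\dagger(\lambda)\omega,z)_{H_-}=((\omega,\varphi_-(\bar\lambda)z))$;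 for $\lambda\in\mathbb{D}_-$, $\varphi_+^\dagger(\lambda):F_\lambda\to H_+$ by $(\varphi_+^\dagger(\lambda)\omega,z)_{H_+}=((\omega,\varphi_+(\bar\lambda)z))$. For a section $s$, $f_s(\lambda)=\varphi_-^\dagger(\lambda)s(\lambda)$ ($\lambda\in\mathbb{D}_+$) and $f_s(\lambda)=\varphi_+^\dagger(\lambda)s(\lambda)$ ($\lambda\in\mathbb{D}_-$). *)

From HB Require Import structures.
From mathcomp Require Import all_boot all_order all_algebra.
From mathcomp Require Import reals.
From mathcomp Require Import complex.
Set Implicit Arguments. Unset Strict Implicit. Unset Printing Implicit Defensive.
Import Order.TTheory GRing.Theory Num.Theory.
Local Open Scope ring_scope.

Section Hilbert.
Variable R : realType.
Local Notation C := R[i].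
Local Notation ii := (Complex (0 : R) 1).

Section Space.
Variables (V : lmodType C) (ip : V -> V -> C).

Definition inner_product_axioms : Prop :=
  [/\ forall (a : C) (x y z : V), ip (a *: x + y) z = a * ip x z + ip y z,
      forall x y : V, ip y x = conjc (ip x y),
      forall x : V, 0 <= ip x x
    & forall x : V, ip x x = 0 -> x = 0].

Definition hnorm (x : V) : R := Num.sqrt (@complex.Re R (ip x x)).

Definition converges_to (u : nat -> V) (l : V) : Prop :=
  forall e : R, 0 < e -> exists N : nat, forall n, (N <= n)%N -> hnorm (u n - l) < e.

Definition cauchy_seq (u : nat -> V) : Prop :=
  forall e : R, 0 < e -> exists N : nat, forall m n, (N <= m)%N -> (N <= n)%N ->
    hnorm (u m - u n) < e.

Definition complete_space : Prop :=
  forall u, cauchy_seq u -> exists l, converges_to u l.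

Definition separable_space : Prop :=
  exists d : nat -> V, forall (x : V) (e : R), 0 < e -> exists n, hnorm (x - d n) < e.

Definition infinite_dimensional : Prop :=
  forall n : nat, exists f : 'I_n -> V,
    forall c : 'I_n -> C, \sum_(i < n) c i *: f i = 0 -> forall i, c i = 0.

Definition is_hilbert : Prop := inner_product_axioms /\ complete_space.

Definition closed_subspace (M : V -> Prop) : Prop :=
  [/\ M 0, (forall (a : C) x y, M x -> M y -> M (a *: x + y))
    & forall u l, (forall n, M (u n)) -> converges_to u l -> M l].
End Space.

Definition linear_map (U V : lmodType C) (f : U -> V) : Prop :=
  forall (a : C) (x y : U), f (a *: x + y) = a *: f x + f y.

Definition bounded_linear (U V : lmodType C) (ipU : U -> U -> C) (ipV : V -> V -> C)
  (f : U -> V) : Prop :=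
  linear_map f /\ exists M : R, forall x, hnorm ipV (f x) <= M * hnorm ipU x.

Definition is_adjoint (U V : lmodType C) (ipU : U -> U -> C) (ipV : V -> V -> C)
  (f : U -> V) (g : V -> U) : Prop :=
  forall x y, ipV (f x) y = ipU x (g y).

Definition strict_contraction (U V : lmodType C) (ipU : U -> U -> C) (ipV : V -> V -> C)
  (f : U -> V) : Prop :=
  exists c : R, c < 1 /\ forall x, hnorm ipV (f x) <= c * hnorm ipU x.

Section Contraction.
Variables (H : lmodType C) (ip : H -> H -> C) (T Ts : H -> H).

Definition is_contraction : Prop := forall x, hnorm ip (T x) <= hnorm ip x.

(* completely non-unitary: no nonzero closed reducing subspace on which T is unitary
   (Ts is the adjoint of T) *)
Definition completely_non_unitary : Prop :=
  forall M : H -> Prop, closed_subspace ip M ->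
    (forall x, M x -> M (T x) /\ M (Ts x)) ->
    (forall x, M x -> Ts (T x) = x /\ T (Ts x) = x) ->
    forall x, M x -> x = 0.

Definition kform (a b : H * H) : C :=
  ii * ip a.1 b.1 - ii * ip a.2 b.2.

Definition A_T (a : H * H) : Prop := exists x, Ts (T x) = x /\ a = (x, T x).

Definition A_perp (a : H * H) : Prop := forall b, A_T b -> kform a b = 0.

Definition N_plus (lam : C) (a : H * H) : Prop :=
  A_perp a /\ exists x, a = (x, lam *: x).
Definition N_minus (lam : C) (a : H * H) : Prop :=
  A_perp a /\ exists x, a = (lam *: x, x).

Variables (Hp Hm : lmodType C) (ipp : Hp -> Hp -> C) (ipm : Hm -> Hm -> C).
Variables (Gp : H * H -> Hp) (Gm : H * H -> Hm).

Definition boundary_quadruple : Prop :=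
  is_hilbert ipp /\ is_hilbert ipm /\
      (forall (c : C) a b, A_perp a -> A_perp b ->
         Gp (c *: a + b) = c *: Gp a + Gp b /\ Gm (c *: a + b) = c *: Gm a + Gm b) /\
      (exists M : R, forall a, A_perp a ->
         Num.sqrt (hnorm ipp (Gp a) ^+ 2 + hnorm ipm (Gm a) ^+ 2)
           <= M * Num.sqrt (hnorm ip a.1 ^+ 2 + hnorm ip a.2 ^+ 2)) /\
      (forall u v, exists a, [/\ A_perp a, Gp a = u & Gm a = v]) /\
      (forall a, A_perp a -> ((Gp a = 0 /\ Gm a = 0) <-> A_T a)) /\
      forall a b, A_perp a -> A_perp b ->
        kform a b = ii * ipp (Gp a) (Gp b) - ii * ipm (Gm a) (Gm b).

(* B : D_+ -> B(Hp, Hm) is the contractive Weyl function; Bs lam is the adjoint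
   of B lam, so B(conj lam)^* = Bs (conj lam). *)
Definition contractive_weyl_function (B : C -> Hp -> Hm) (Bs : C -> Hm -> Hp) : Prop :=
  forall lam : C, `|lam| < 1 ->
      (forall u, exists a, N_plus lam a /\ Gp a = u) /\
      (forall a b, N_plus lam a -> N_plus lam b -> Gp a = Gp b -> a = b) /\
      bounded_linear ipp ipm (B lam) /\ strict_contraction ipp ipm (B lam) /\
      (forall a, N_plus lam a -> Gm a = B lam (Gp a)) /\
      (forall v, exists a, N_minus lam a /\ Gm a = v) /\
      (forall a b, N_minus lam a -> N_minus lam b -> Gm a = Gm b -> a = b) /\
      is_adjoint ipp ipm (B lam) (Bs lam) /\
    (forall a, N_minus lam a -> Gp a = Bs (conjc lam) (Gm a)).

(* For lambda in D_+ : phi_-^dagger(lambda) w = v, characterised by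
   (v, z)_{H_-} = ((w, phi_-(conj lambda) z)) for all z, where
   phi_-(conj lambda) z = pr_2 (gamma_-(conj lambda) z) and gamma_-(conj lambda) z
   is the unique a in N_{conj lambda} with Gamma_- a = z.  Elements w of F_lambda
   are (conjugate-linear) functionals; the pairing ((w, e)) is w e. *)
Definition phi_minus_dagger (lam : C) (w : H -> C) (v : Hm) : Prop :=
  forall z a, N_minus (conjc lam) a -> Gm a = z -> ipm v z = w a.2.

Definition phi_plus_dagger (lam : C) (w : H -> C) (v : Hp) : Prop :=
  forall z a, N_plus (conjc lam) a -> Gp a = z -> ipp v z = w a.1.

Definition hat (x : H) : C -> H -> C := fun _ omega => ip x omega.

Definition f_sec_plus (s : C -> H -> C) (lam : C) (v : Hm) : Prop :=
  phi_minus_dagger lam (s lam) v.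
Definition f_sec_minus (s : C -> H -> C) (lam : C) (v : Hp) : Prop :=
  phi_plus_dagger lam (s lam) v.
End Contraction.
End Hilbert.

(* Pair both sides with Γ_∓ a for an arbitrary a ∈ N_{λ̄}; since Γ_∓ maps
   N_{λ̄} onto H_∓, these pairings determine them.  By the definition of φ^†
   the left side pairs to (x, a₁) - (y, a₂) (once λ is moved across the inner
   product), which is [(x, y), a] / i.  Green's identity expresses this through
   Γ_± a, and on N_{λ̄} the Weyl function and its adjoint turn the result into
   the pairing of the right side. *)
From HB Require Import structures.
From mathcomp Require Import all_boot all_order all_algebra.
From mathcomp Require Import reals.
From mathcomp Require Import complex.
Import Order.TTheory GRing.Theory Num.Theory.
Local Open Scope ring_scope.
Set Implicit Arguments. Unset Strict Implicit.

Section InnerProduct.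
Variables (R : realType) (V : lmodType R[i]) (ip : V -> V -> R[i]).
Hypothesis hip : inner_product_axioms ip.

Lemma ip0l z : ip 0 z = 0.
Proof.
case: hip => lin _ _ _; have := lin 1 0 0 z.
rewrite scaler0 addr0 mul1r => h.
by apply: (addrI (ip 0 z)); rewrite addr0 -h.
Qed.

Lemma ipDl x y z : ip (x + y) z = ip x z + ip y z.
Proof. by case: hip => lin _ _ _; have := lin 1 x y z; rewrite scale1r mul1r. Qed.

Lemma ipZl a x z : ip (a *: x) z = a * ip x z.
Proof. by case: hip => lin _ _ _; have := lin a x 0 z; rewrite !addr0 ip0l addr0. Qed.

Lemma ipBl x y z : ip (x - y) z = ip x z - ip y z.
Proof. by rewrite ipDl -scaleN1r ipZl mulN1r. Qed.

Lemma ipZr a x z : ip x (a *: z) = conjc a * ip x z.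
Proof. by case: hip => _ sym _ _; rewrite sym ipZl rmorphM /= -sym. Qed.

Lemma ip_eq u v : (forall z, ip u z = ip v z) -> u = v.
Proof.
move=> h; apply/eqP; rewrite -subr_eq0; apply/eqP.
by case: hip => _ _ _ def; apply: def; rewrite ipBl h subrr.
Qed.
End InnerProduct.

Lemma is_adjointC (R : realType) (U V : lmodType R[i])
    (ipU : U -> U -> R[i]) (ipV : V -> V -> R[i]) (f : U -> V) (g : V -> U) :
  inner_product_axioms ipU -> inner_product_axioms ipV ->
  is_adjoint ipU ipV f g -> forall y x, ipU (g y) x = ipV y (f x).
Proof.
by move=> [_ symU _ _] [_ symV _ _] adj y x; rewrite symU -adj -symV.
Qed.

Section WeylFunction.
Variables (R : realType) (H : lmodType R[i]) (ip : H -> H -> R[i]) (T Ts : H -> H).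
Variables (Hp Hm : lmodType R[i]) (ipp : Hp -> Hp -> R[i]) (ipm : Hm -> Hm -> R[i]).
Variables (Gp : H * H -> Hp) (Gm : H * H -> Hm).
Variables (B : R[i] -> Hp -> Hm) (Bs : R[i] -> Hm -> Hp).
Hypothesis hH : inner_product_axioms ip.
Hypothesis hbq : boundary_quadruple ip T Ts ipp ipm Gp Gm.
Hypothesis hW : contractive_weyl_function ip T Ts ipp ipm Gp Gm B Bs.

Let hp : inner_product_axioms ipp. Proof. by case: hbq => -[]. Qed.
Let hm : inner_product_axioms ipm. Proof. by case: hbq => _ [[]]. Qed.

Lemma boundary_green a b : A_perp ip T Ts a -> A_perp ip T Ts b ->
  ip a.1 b.1 - ip a.2 b.2 = ipp (Gp a) (Gp b) - ipm (Gm a) (Gm b).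
Proof.
have ii_neq0 : Complex (0 : R) 1 != 0 by apply/eqP => -[] /eqP; rewrite oner_eq0.
case: hbq => _ [_ [_ [_ [_ [_ green]]]]] Pa Pb.
by apply: (mulfI ii_neq0); rewrite !mulrBr -green.
Qed.

Section Disc.
Variable lam : R[i].
Hypothesis lam_lt1 : `|lam| < 1.

Lemma weyl_Gp_onto u : exists a, N_plus ip T Ts lam a /\ Gp a = u.
Proof. by case: (hW lam_lt1). Qed.

Lemma weyl_Gm_onto v : exists a, N_minus ip T Ts lam a /\ Gm a = v.
Proof. by case: (hW lam_lt1) => _ [_ [_ [_ [_ []]]]]. Qed.

Lemma weyl_GmE a : N_plus ip T Ts lam a -> Gm a = B lam (Gp a).
Proof. by case: (hW lam_lt1) => _ [_ [_ [_ [GmE _]]]]; apply: GmE. Qed.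

Lemma weyl_GpE a : N_minus ip T Ts lam a -> Gp a = Bs (conjc lam) (Gm a).
Proof. by case: (hW lam_lt1) => _ [_ [_ [_ [_ [_ [_ [_ GpE]]]]]]]; apply: GpE. Qed.

Lemma weyl_adjoint : is_adjoint ipp ipm (B lam) (Bs lam).
Proof. by case: (hW lam_lt1) => _ [_ [_ [_ [_ [_ [_ []]]]]]]. Qed.
End Disc.

Variables (x y : H).
Hypothesis Pxy : A_perp ip T Ts (x, y).

Lemma f_sec_plus_hat lam vx vy : `|lam| < 1 ->
  f_sec_plus ip T Ts ipm Gm (hat ip x) lam vx ->
  f_sec_plus ip T Ts ipm Gm (hat ip y) lam vy ->
  lam *: vx - vy = B lam (Gp (x, y)) - Gm (x, y).
Proof.
move=> lam_lt1 fx fy; apply: (ip_eq hm) => z.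
have lamJ_lt1 : `|conjc lam| < 1 by rewrite normcJ.
have [a [Na <-]] := weyl_Gm_onto lamJ_lt1 z.
have [Pa [w a_def]] := Na.
have GpE := weyl_GpE lamJ_lt1 Na; rewrite conjcK in GpE.
rewrite !(ipBl hm) (ipZl hm) (fx _ _ Na erefl) (fy _ _ Na erefl) weyl_adjoint //.
rewrite -GpE -boundary_green //= a_def /=.
by rewrite (ipZr hH) conjcK.
Qed.

Lemma f_sec_minus_hat lam vx vy : `|lam| < 1 ->
  f_sec_minus ip T Ts ipp Gp (hat ip x) lam vx ->
  f_sec_minus ip T Ts ipp Gp (hat ip y) lam vy ->
  vx - lam *: vy = Gp (x, y) - Bs (conjc lam) (Gm (x, y)).
Proof.
move=> lam_lt1 fx fy; apply: (ip_eq hp) => z.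
have lamJ_lt1 : `|conjc lam| < 1 by rewrite normcJ.
have [a [Na <-]] := weyl_Gp_onto lamJ_lt1 z.
have [Pa [w a_def]] := Na.
rewrite !(ipBl hp) (ipZl hp) (fx _ _ Na erefl) (fy _ _ Na erefl).
rewrite (is_adjointC hp hm (weyl_adjoint lamJ_lt1)) -weyl_GmE //.
rewrite -boundary_green //= a_def /=.
by rewrite (ipZr hH) conjcK.
Qed.
End WeylFunction.

Theorem theorem4p14 (R : realType)
  (H : lmodType R[i]) (ip : H -> H -> R[i]) (T Ts : H -> H)
  (Hp Hm : lmodType R[i]) (ipp : Hp -> Hp -> R[i]) (ipm : Hm -> Hm -> R[i])
  (Gp : H * H -> Hp) (Gm : H * H -> Hm)
  (B : R[i] -> Hp -> Hm) (Bs : R[i] -> Hm -> Hp) :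
  is_hilbert ip -> separable_space ip -> infinite_dimensional H ->
  bounded_linear ip ip T -> is_adjoint ip ip T Ts ->
  is_contraction ip T -> completely_non_unitary ip T Ts ->
  boundary_quadruple ip T Ts ipp ipm Gp Gm ->
  contractive_weyl_function ip T Ts ipp ipm Gp Gm B Bs ->
  forall x y : H, A_perp ip T Ts (x, y) ->
  (forall lam : R[i], `|lam| < 1 ->
     forall vx vy : Hm,
       f_sec_plus ip T Ts ipm Gm (hat ip x) lam vx ->
       f_sec_plus ip T Ts ipm Gm (hat ip y) lam vy ->
       lam *: vx - vy = B lam (Gp (x, y)) - Gm (x, y))
  /\
  (forall lam : R[i], `|lam| < 1 ->
     forall vx vy : Hp,
       f_sec_minus ip T Ts ipp Gp (hat ip x) lam vx ->
       f_sec_minus ip T Ts ipp Gp (hat ip y) lam vy ->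
       vx - lam *: vy = Gp (x, y) - Bs (conjc lam) (Gm (x, y))).
Proof.
move=> [hH _] _ _ _ _ _ _ hbq hW x y Pxy; split=> lam lam_lt1 vx vy.
- exact: (f_sec_plus_hat hH hbq hW Pxy).
- exact: (f_sec_minus_hat hH hbq hW Pxy).
Qed.
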